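(* In the two-source model of the context, define the (randomized) query scheme in which, for every $t$, $Q_t$ depends only on $(U_t,X_t,S_t)$ and, given $U_t=u$ and $X_t=x$, $$P(Q_t=\{x\}\mid U_t=u,X_t=x)=\frac{\pi_t(x)}{p(x\mid u)},\qquad P(Q_t=\{A,B\}\mid U_t=u,X_t=x)=1-\frac{\pi_t(x)}{p(x\mid u)},$$ and $P(Q_t=\{\bar x\}\mid U_t=u,X_t=x)=0$ where $\bar x$ is the other source. (This is implementable since $U_t$ only involves $X_{F^-(t)}$ and $X_{t+1}$ and $\omega\ge1$.) Then for every $t$: the scheme is decodable; $P(|Q_t|=1)=\pi_t(A)+\pi_t(B)$, so $\mathbb E|Q_t|=2-\pi_t(A)-\pi_t(B)$; $I(U_t;Q_0,\dots,Q_t)=0$; and the privacy constraint $I(X_{\mathcal B_t};Q_0,\dots,Q_t)=0$ holds.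
   Context: Model. There are $N=2$ sources, $\mathcal N=\{A,B\}$. The user's requests $X_t\in\{A,B\}$, $t\ge0$, form a time-homogeneous Markov chain with transition matrix $M$. Privacy modes $F_t\in\{\mathrm{ON},\mathrm{OFF}\}$ form a known sequence with $F_0=\mathrm{ON}$. Local randomness $S_0,S_1,\dots$ is mutually independent and independent of the requests. Queries $Q_t$ take values in $\{\{A\},\{B\},\{A,B\}\}$; decodability means $X_t\in Q_t$. Privacy: $I(X_{\mathcal B_t};Q_0,\dots,Q_t)=0$ with $\mathcal B_t=\{i\le t: F_i=\mathrm{ON}\}\cup\{i: i\ge t+1\}$. Notation. $F^-(t)=\max\{i\le t: F_i=\mathrm{ON}\}$, $U_t=(X_{F^-(t)},X_{t+1})$, $p(x\mid u)=P(X_t=x\mid U_t=u)$ (computable from powers of $M$), and $\pi_t(x)=\min_u p(x\mid u)$ over $u\in\{A,B\}^2$ with $P(U_t=u)>0$. *)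

From HB Require Import structures.
From mathcomp Require Import all_boot.
From Stdlib Require Import Reals.

Set Implicit Arguments.
Unset Strict Implicit.
Unset Printing Implicit Defensive.

Definition src := bool.
Definition A : src := true.
Definition B : src := false.

(* Queries: Some x = {x}, None = {A,B}. *)
Definition query := option src.
Definition in_query (x : src) (q : query) : bool :=
  match q with Some y => y == x | None => true end.
Definition qsize (q : query) : nat :=
  match q with Some _ => 1 | None => 2 end.

Definition rsum (T : finType) (f : T -> R) : R := \big[Rplus/0%R]_(i : T) f i.

Definition pathprob (mu : src -> R) (M : src -> src -> R) (m : nat)
  (x : (m.+1).-tuple src) : R :=
  Rmult (mu (nth A x 0))
        (\big[Rmult/1%R]_(i < m) M (nth A x i) (nth A x i.+1)).

(* F^-(t) = max {i <= t : F_i = ON}  (with F_0 = ON) *)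
Fixpoint Fminus (F : nat -> bool) (t : nat) : nat :=
  match t with
  | 0 => 0
  | t'.+1 => if F t'.+1 then t'.+1 else Fminus F t'
  end.

Definition Uof (F : nat -> bool) (t : nat) (x : seq src) : src * src :=
  (nth A x (Fminus F t), nth A x t.+1).

Definition PU mu M F (t : nat) (u : src * src) : R :=
  rsum (fun x : (t.+2).-tuple src =>
          if Uof F t x == u then pathprob mu M x else 0%R).

Definition PXU mu M F (t : nat) (x0 : src) (u : src * src) : R :=
  rsum (fun x : (t.+2).-tuple src =>
          if (Uof F t x == u) && (nth A x t == x0) then pathprob mu M x else 0%R).

Definition pcond mu M F t (x : src) (u : src * src) : R :=
  Rdiv (PXU mu M F t x u) (PU mu M F t u).

Definition all_u : seq (src * src) := [:: (A, A); (A, B); (B, A); (B, B)].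

(* pi_t(x) = min over u with P(U_t = u) > 0 of p(x | u) *)
Definition pi_t mu M F t (x : src) : R :=
  match foldr (fun u acc =>
                 if Rlt_dec 0 (PU mu M F t u)
                 then Some (match acc with
                            | None => pcond mu M F t x u
                            | Some m => Rmin (pcond mu M F t x u) m end)
                 else acc) None all_u with
  | Some m => m
  | None => 0%R
  end.

Definition kern mu M F t (u : src * src) (x : src) (q : query) : R :=
  match q with
  | Some y => if y == x then Rdiv (pi_t mu M F t x) (pcond mu M F t x u) else 0%R
  | None => Rminus 1 (Rdiv (pi_t mu M F t x) (pcond mu M F t x u))
  end.

(* Joint outcome of (X_0..X_n) and (Q_0..Q_t); Q_s depends only on
   (U_s, X_s, S_s) with independent local randomness, so the joint law is
   the path probability times the product of the kernels. *)
Definition Omega (n t : nat) : finType :=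
  ((n.+1).-tuple src * (t.+1).-tuple query)%type.

Definition Pjoint mu M F (n t : nat) (w : Omega n t) : R :=
  Rmult (pathprob mu M w.1)
        (\big[Rmult/1%R]_(s < t.+1)
            kern mu M F s (Uof F s w.1) (nth A w.1 s) (nth None w.2 s)).

Definition pr (T : finType) (P : T -> R) (E : pred T) : R :=
  rsum (fun w => if E w then P w else 0%R).
Definition expect (T : finType) (P : T -> R) (f : T -> R) : R :=
  rsum (fun w => Rmult (P w) (f w)).

(* mutual information I(f; g) under P (convention 0 log 0 = 0) *)
Definition MI (T T1 T2 : finType) (P : T -> R) (f : T -> T1) (g : T -> T2) : R :=
  rsum (fun a : T1 => rsum (fun b : T2 =>
    let pab := pr P (fun w => (f w == a) && (g w == b)) in
    let pa := pr P (fun w => f w == a) in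
    let pb := pr P (fun w => g w == b) in
    if Rlt_dec 0 pab then Rmult pab (ln (Rdiv pab (Rmult pa pb))) else 0%R)).

Definition inB (F : nat -> bool) (t i : nat) : bool :=
  ((i <= t)%N && F i) || (t < i)%N.

(* X_{B_t} restricted to indices <= n (non-B coordinates masked out) *)
Definition XB (F : nat -> bool) (n t : nat) (x : (n.+1).-tuple src)
  : {ffun 'I_n.+1 -> option src} :=
  [ffun i : 'I_n.+1 => if inB F t i then Some (nth A x i) else None].

(* The proof is in three layers.
   - Generic finite sums over tuples, and the law of a Markov path: the
     marginalisation of trailing steps, and the "splicing" identity (two
     paths that agree at times m and e may exchange their segments between
     m and e without changing the product of their probabilities).
   - The one-step mixing identity: for every u with P(U_t = u) > 0,
     sum_x p(x|u) K_t(u,x,q) does not depend on u (it is the law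
     [query_law] of Q_t).
   - The main induction on J: for every J <= n, the joint law of the
     coordinates visible at time J ("not OFF before J") and of Q_0..Q_{J-1}
     factorizes as (law of the visible coordinates) * prod_s query_law s.
     An ON step just reveals X_J, which determines U_J's first component;
     an OFF step hides X_J, and the splicing identity shows that X_J is
     independent of the visible coordinates given U_J.
   Taking J = t+1 gives independence of X_{B_t} and (Q_0..Q_t), hence both
   mutual informations vanish (U_t is a function of X_{B_t}); summing out the
   queries gives the law of Q_t and the decodability/size statements. *)

From HB Require Import structures.
From mathcomp Require Import all_boot.
From Stdlib Require Import Reals Lra Lia.
From mathcomp Require Import Rstruct zify.

Set Implicit Arguments.
Unset Strict Implicit.
Unset Printing Implicit Defensive.

Local Open Scope R_scope.

Section TupleSums.
Variable T : finType.

Definition tsum (k : nat) (f : seq T -> R) : R :=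
  \big[Rplus/0]_(x : k.-tuple T) f x.

Lemma tsum0 (f : seq T -> R) : tsum 0 f = f [::].
Proof.
rewrite /tsum (eq_bigr (fun _ => f [::])); last by move=> x _; rewrite (tuple0 x).
by rewrite big_const card_tuple expn0 /=; lra.
Qed.

Lemma tsum_cons k (f : seq T -> R) :
  tsum k.+1 f = \big[Rplus/0]_(a : T) tsum k (fun s => f (a :: s)).
Proof.
rewrite /tsum (reindex (fun p : T * k.-tuple T => [tuple of p.1 :: p.2])) /=.
  by rewrite -(pair_bigA _ (fun a (s : k.-tuple T) => f (a :: s))).
exists (fun y : k.+1.-tuple T => (thead y, [tuple of behead y])).
  by move=> [a s] _; congr pair; apply: val_inj.
by move=> y _; apply: val_inj => /=; case: y => [[|a s] //= _].
Qed.

Lemma tsum_rcons k (f : seq T -> R) :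
  tsum k.+1 f = tsum k (fun s => \big[Rplus/0]_(a : T) f (rcons s a)).
Proof.
rewrite /tsum (reindex (fun p : k.-tuple T * T => [tuple of rcons p.1 p.2])) /=.
  by rewrite -(pair_bigA _ (fun (s : k.-tuple T) a => f (rcons s a))).
exists (fun y : k.+1.-tuple T =>
          ([tuple of belast (thead y) (behead y)], last (thead y) (behead y))).
  move=> [[[|b s] Hs] a] _; congr pair => //=.
  - by apply: val_inj => /=.
  - by apply: val_inj; rewrite /= belast_rcons.
  - by rewrite last_rcons.
move=> y _; apply: val_inj => /=.
by rewrite -lastI; exact: (congr1 val (esym (tuple_eta y))).
Qed.

Lemma tsum_ext k (f g : seq T -> R) :
  (forall x, size x = k -> f x = g x) -> tsum k f = tsum k g.
Proof. by move=> H; apply: eq_bigr => x _; rewrite H // size_tuple. Qed.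

Lemma tsum_le k (f g : seq T -> R) : (forall x, f x <= g x) -> tsum k f <= tsum k g.
Proof.
move=> H; apply: (big_ind2 (fun a b => a <= b)) => //; first lra.
by move=> *; lra.
Qed.

Lemma tsum_ge0 k (f : seq T -> R) : (forall x, 0 <= f x) -> 0 <= tsum k f.
Proof.
move=> H; apply: (big_ind (fun a => 0 <= a)) => //; first lra.
by move=> *; lra.
Qed.

Lemma tsumD k (f g : seq T -> R) : tsum k (fun x => f x + g x) = tsum k f + tsum k g.
Proof. by rewrite /tsum big_split. Qed.

Lemma tsumZ k (f : seq T -> R) c : tsum k (fun x => f x * c) = tsum k f * c.
Proof. by rewrite /tsum big_distrl. Qed.

Lemma tsumM k1 k2 (f g : seq T -> R) :
  tsum k1 f * tsum k2 g =
  \big[Rplus/0]_(p : k1.-tuple T * k2.-tuple T) (f p.1 * g p.2).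
Proof.
rewrite /tsum big_distrl /=.
rewrite -(pair_bigA _ (fun (x : k1.-tuple T) (w : k2.-tuple T) => f x * g w)).
by apply: eq_bigr => x _; rewrite big_distrr.
Qed.

Lemma tsum_prod (d : T) k (f : nat -> T -> R) :
  \big[Rplus/0]_(b : k.-tuple T) \big[Rmult/1]_(s < k) f s (nth d b s) =
  \big[Rmult/1]_(s < k) \big[Rplus/0]_(q : T) f s q.
Proof.
elim: k f => [|k IH] f.
  have := tsum0 (fun b => \big[Rmult/1]_(s < 0) f s (nth d b s)).
  by rewrite /tsum => ->; rewrite !big_ord0.
have := tsum_cons k (fun b => \big[Rmult/1]_(s < k.+1) f s (nth d b s)).
rewrite /tsum => ->; rewrite big_ord_recl.
rewrite (eq_bigr (fun a => f 0%nat a * \big[Rplus/0]_(x : k.-tuple T)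
                              \big[Rmult/1]_(s < k) f s.+1 (nth d x s))); last first.
  by move=> a _; rewrite big_distrr /=; apply: eq_bigr => x _; rewrite big_ord_recl.
rewrite -big_distrl /= (IH (fun s => f s.+1)); congr (_ * _).
Qed.

End TupleSums.

Lemma prod_if (N : nat) (c : nat -> bool) (a b : nat -> R) :
  \big[Rmult/1]_(i < N) (if c i then a i else b i) =
  \big[Rmult/1]_(i < N | c i) a i * \big[Rmult/1]_(i < N | ~~ c i) b i.
Proof.
rewrite (bigID (fun i : 'I_N => c i)) /=; congr (_ * _); apply: eq_bigr => i.
  by move=> ->.
by move/negPf=> ->.
Qed.

Lemma prod_window (N e m : nat) (f : nat -> R) : (e <= N)%nat ->
  \big[Rmult/1]_(i < N | (m <= i < e)%nat) f i =
  \big[Rmult/1]_(i < e | (m <= i < e)%nat) f i.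
Proof.
move=> H; rewrite (big_ord_widen_cond N (fun i => (m <= i < e)%nat) f H).
by apply: eq_bigl => i /=; case H2: (m <= i < e)%nat => //=; case/andP: H2 => _ ->.
Qed.

Section MarkovPath.
Variables (mu : src -> R) (M : src -> src -> R).
Hypothesis Hmu0 : forall x, 0 <= mu x.
Hypothesis Hmu1 : mu A + mu B = 1.
Hypothesis HM0 : forall x y, 0 <= M x y.
Hypothesis HM1 : forall x, M x A + M x B = 1.

Definition trans (x : seq src) (i : nat) : R := M (nth A x i) (nth A x i.+1).

Definition pp (l : seq src) : R :=
  mu (nth A l 0) * \big[Rmult/1]_(i < (size l).-1) trans l i.

Lemma pathprobE m (x : m.+1.-tuple src) : pathprob mu M x = pp x.
Proof. by rewrite /pathprob /pp size_tuple. Qed.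

Lemma pp_ge0 l : 0 <= pp l.
Proof.
rewrite /pp; apply: Rmult_le_pos; first exact: Hmu0.
apply: (big_ind (fun x => 0 <= x)) => //; first lra.
  by move=> x y; apply: Rmult_le_pos.
by move=> i _; exact: HM0.
Qed.

Lemma pp_rcons (s : seq src) (a : src) : (0 < size s)%nat ->
  pp (rcons s a) = pp s * M (nth A s (size s).-1) a.
Proof.
move=> Hs; have [k Hk] : exists k, size s = k.+1.
  by case: (size s) Hs => [//|k] _; exists k.
rewrite /pp size_rcons Hk /= nth_rcons Hk /= big_ord_recr /= Rmult_assoc.
congr (_ * (_ * _)).
  apply: eq_bigr => i _; rewrite /trans !nth_rcons Hk.
  by rewrite (ltn_trans (ltn_ord i)) // ltnS (ltn_ord i).
by rewrite /trans !nth_rcons Hk ltnSn ltnn eqxx.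
Qed.

Lemma pp_marg N k (f : seq src -> R) : (k <= N)%nat ->
  (forall s, (k.+1 <= size s)%nat -> f s = f (take k.+1 s)) ->
  tsum N.+1 (fun l => pp l * f l) = tsum k.+1 (fun l => pp l * f l).
Proof.
move=> HkN Hf.
have drop_last j : (k <= j)%nat ->
    tsum j.+2 (fun l => pp l * f l) = tsum j.+1 (fun l => pp l * f l).
  move=> Hkj; rewrite tsum_rcons; apply: eq_bigr => x _.
  have Hx : size x = j.+1 by rewrite size_tuple.
  have Hfr a : f (rcons x a) = f x.
    rewrite Hf ?size_rcons ?Hx; last by lia.
    by rewrite (Hf x) ?Hx -?cats1 ?takel_cat ?Hx //; lia.
  rewrite big_bool !pp_rcons ?Hx // !Hfr.
  have := HM1 (nth A x j); rewrite /A /B /= => H.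
  by rewrite -[RHS]Rmult_1_r -H; ring.
elim: N HkN => [|N IH]; first by rewrite leqn0 => /eqP ->.
rewrite leq_eqVlt => /orP [/eqP -> //|HkN].
by rewrite drop_last // IH.
Qed.

Lemma pp_total n : \big[Rplus/0]_(x : n.+1.-tuple src) pp x = 1.
Proof.
have one_step : tsum 1 (fun l => pp l * 1) = 1.
  rewrite tsum_cons big_bool /= !tsum0 /pp /= !big_ord0.
  by have := Hmu1; rewrite /A /B; lra.
rewrite -one_step -(@pp_marg n 0 (fun _ => 1)) //.
by apply: eq_bigr => x _; rewrite Rmult_1_r.
Qed.

Definition splice (m e : nat) (x w : seq src) : seq src :=
  [seq (if (m < i < e)%nat then nth A w i else nth A x i) | i <- iota 0 (size x)].

Lemma size_splice m e x w : size (splice m e x w) = size x.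
Proof. by rewrite /splice size_map size_iota. Qed.

Lemma nth_splice m e x w i : nth A (splice m e x w) i =
  if (i < size x)%nat then (if (m < i < e)%nat then nth A w i else nth A x i) else A.
Proof.
rewrite /splice; case: ltnP => Hi.
  by rewrite (nth_map 0%nat) ?size_iota // nth_iota.
by rewrite nth_default // size_map size_iota.
Qed.

Lemma spliceK m e x w : (e <= size w)%nat ->
  splice m e (splice m e x w) (splice m e w x) = x.
Proof.
move=> Hw; apply: (@eq_from_nth _ A); rewrite ?size_splice // => i Hi.
rewrite nth_splice size_splice Hi !nth_splice Hi.
case: (boolP (m < i < e)%nat) => H //.
by rewrite (_ : (i < size w)%nat = true) //; lia.
Qed.

Lemma trans_splice m e x w i : (m < e)%nat -> (e < size x)%nat -> (e < size w)%nat ->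
  nth A x m = nth A w m -> nth A x e = nth A w e -> (i.+1 < size x)%nat ->
  trans (splice m e x w) i = if (m <= i < e)%nat then trans w i else trans x i.
Proof.
move=> Hme Hex Hew Hm He Hi; rewrite /trans !nth_splice Hi (ltn_trans (ltnSn i) Hi).
case: (ltngtP m i) => Hmi /=.
- rewrite (_ : (m < i.+1)%nat = true) /=; last by lia.
  case: (ltnP i e) => Hie.
    case: (ltngtP i.+1 e) => Hie2 /=; [by [] | lia | by rewrite -Hie2 in He; rewrite He].
  by rewrite (_ : (i.+1 < e)%nat = false); last by lia.
- by rewrite (_ : (m < i.+1 < e)%nat = false); last by lia.
- subst i; rewrite ltnSn Hme /= Hm.
  case: (ltngtP m.+1 e) => Hie /=; [by [] | lia | by rewrite -Hie in He; rewrite He].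
Qed.

(* Markov property: exchanging the segments between two common values
   preserves the joint probability of a pair of paths. *)
Lemma pp_splice m e x w : (m < e)%nat -> (e < size x)%nat -> (e < size w)%nat ->
  nth A x m = nth A w m -> nth A x e = nth A w e ->
  pp (splice m e x w) * pp (splice m e w x) = pp x * pp w.
Proof.
move=> Hme Hex Hew Hm He.
pose win y := \big[Rmult/1]_(i < e | (m <= i < e)%nat) trans y i.
pose out y := \big[Rmult/1]_(i < (size y).-1 | ~~ (m <= i < e)%nat) trans y i.
have pp_split y : (e < size y)%nat -> pp y = mu (nth A y 0) * (win y * out y).
  move=> Hy; rewrite /pp (bigID (fun i : 'I__ => (m <= i < e)%nat)) /=.
  by rewrite prod_window //; lia.
have pp_spliced y z : (e < size y)%nat -> (e < size z)%nat ->
    nth A y m = nth A z m -> nth A y e = nth A z e ->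
    pp (splice m e y z) = mu (nth A y 0) * (win z * out y).
  move=> Hy Hz Hyzm Hyze.
  rewrite /pp size_splice nth_splice (leq_ltn_trans (leq0n e) Hy).
  rewrite (eq_bigr (fun i : 'I__ => if (m <= i < e)%nat then trans z i else trans y i)).
    by rewrite (prod_if _ (fun i => (m <= i < e)%nat) (trans z) (trans y)) prod_window //; lia.
  by move=> i _; apply: trans_splice => //; have := ltn_ord i; lia.
rewrite pp_spliced // pp_spliced // pp_split // pp_split //; ring.
Qed.

End MarkovPath.

Section LastOn.
Variable F : nat -> bool.

Lemma Fminus_le J : (Fminus F J <= J)%nat.
Proof. by elim: J => [//|J IH] /=; case: (F J.+1) => //; exact: leq_trans IH _. Qed.

Lemma Fminus_on (HF0 : F 0%nat = true) J : F (Fminus F J) = true.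
Proof. by elim: J => [//|J IH] /=; case E: (F J.+1). Qed.

Lemma Fminus_off J i : (Fminus F J < i)%nat -> (i <= J)%nat -> F i = false.
Proof.
elim: J i => [|J IH] i /=; first by case: i.
case E: (F J.+1) => H1 H2; first by rewrite ltnNge H2 in H1.
by move: H2; rewrite leq_eqVlt => /orP [/eqP -> //|]; apply: IH.
Qed.

Lemma Fminus_id J : F J = true -> Fminus F J = J.
Proof. by case: J => [//|J] /= ->. Qed.

End LastOn.

Lemma ifmul (b : bool) p : (if b then p else 0) = p * (if b then 1 else 0).
Proof. by case: b; ring. Qed.

Lemma ifprod (a b : bool) p q :
  (if a then p else 0) * (if b then q else 0) = if a && b then p * q else 0.
Proof. by case: a; case: b => /=; ring. Qed.

Lemma sum_query (f : query -> R) :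
  \big[Rplus/0]_(q : query) f q = f (Some A) + f (Some B) + f None.
Proof.
rewrite (bigD1 None) //= (bigD1 (Some A)) //= (bigD1 (Some B)) //= big1.
  set a := f None; set b := f (Some A); set c := f (Some B).
  by rewrite /= Rplus_0_r; ring.
by case => [[]|].
Qed.

Lemma rsum_pair (T1 T2 : finType) (f : T1 * T2 -> R) :
  rsum f = rsum (fun a => rsum (fun b => f (a, b))).
Proof. by rewrite /rsum (pair_bigA _ (fun a b => f (a, b))); apply: eq_bigr => -[a b]. Qed.

Lemma pr_ext (T : finType) (P : T -> R) (E1 E2 : pred T) :
  (forall w, E1 w = E2 w) -> pr P E1 = pr P E2.
Proof. by move=> H; apply: eq_bigr => w _; rewrite H. Qed.

Lemma MI_indep (T T1 T2 : finType) (P : T -> R) (f : T -> T1) (g : T -> T2) :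
  (forall a b, pr P (fun w => (f w == a) && (g w == b)) =
               pr P (fun w => f w == a) * pr P (fun w => g w == b)) ->
  MI P f g = 0.
Proof.
move=> H; rewrite /MI /rsum big1 // => a _; rewrite big1 // => b _ /=.
case: Rlt_dec => // Hp; rewrite -H /Rdiv Rinv_r; last lra.
by rewrite ln_1 Rmult_0_r.
Qed.

Lemma sum_partition (X Y : finType) (h : X -> Y) (Phi : pred Y) (g : X -> R) :
  \big[Rplus/0]_(x : X) (if Phi (h x) then g x else 0) =
  \big[Rplus/0]_(a : Y)
     (if Phi a then \big[Rplus/0]_(x : X) (if h x == a then g x else 0) else 0).
Proof.
rewrite (eq_bigr (fun a => \big[Rplus/0]_(x : X) (if Phi a && (h x == a) then g x else 0)));
  last by move=> a _; case: (Phi a) => //=; rewrite big1.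
rewrite exchange_big /=; apply: eq_bigr => x _.
rewrite (bigD1 (h x)) //= eqxx andbT big1; first by rewrite Rplus_0_r.
by move=> a /negPf Ha; rewrite eq_sym Ha andbF.
Qed.

Lemma sum_if_eq (T : finType) (b : T) (c : bool) (h : T -> R) :
  \big[Rplus/0]_(q : T) (if c && (q == b) then h q else 0) = if c then h b else 0.
Proof.
rewrite (bigD1 b) //= eqxx andbT big1; first by rewrite Rplus_0_r.
by move=> q /negPf ->; rewrite andbF.
Qed.

Section Scheme.
Variables (mu : src -> R) (M : src -> src -> R) (F : nat -> bool).
Hypothesis Hmu0 : forall x, 0 <= mu x.
Hypothesis Hmu1 : mu A + mu B = 1.
Hypothesis HM0 : forall x y, 0 <= M x y.
Hypothesis HM1 : forall x, M x A + M x B = 1.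
Hypothesis HF0 : F 0%nat = true.

Lemma PXU_tsum J z u : PXU mu M F J z u =
  tsum J.+2 (fun l => if (Uof F J l == u) && (nth A l J == z) then pp mu M l else 0).
Proof. by apply: eq_bigr => x _; rewrite pathprobE. Qed.

Lemma PU_tsum J u :
  PU mu M F J u = tsum J.+2 (fun l => if Uof F J l == u then pp mu M l else 0).
Proof. by apply: eq_bigr => x _; rewrite pathprobE. Qed.

Lemma PXU_ge0 J z u : 0 <= PXU mu M F J z u.
Proof.
rewrite PXU_tsum; apply: tsum_ge0 => l.
by case: ifP => _; [exact: pp_ge0 | lra].
Qed.

Lemma PXU_sum J u : PXU mu M F J A u + PXU mu M F J B u = PU mu M F J u.
Proof.
rewrite /PXU /PU /rsum -big_split /=; apply: eq_bigr => x _.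
case: (Uof F J x == u) => /=; last lra.
by case: (nth A x J); rewrite /A /B /=; lra.
Qed.

Lemma PU_ge0 J u : 0 <= PU mu M F J u.
Proof. by rewrite -PXU_sum; have := PXU_ge0 J A u; have := PXU_ge0 J B u; lra. Qed.

(* At an ON time, U_J.1 = X_J, so X_J is determined by U_J. *)
Lemma PXU_on J z u : F J = true -> PXU mu M F J z u = if z == u.1 then PU mu M F J u else 0.
Proof.
move=> HJ; rewrite PXU_tsum PU_tsum; case: eqP => [->|Hz].
  apply: tsum_ext => l _; case E: (Uof F J l == u) => //=.
  by move/eqP: E; rewrite /Uof Fminus_id // => <- /=; rewrite eqxx.
rewrite /tsum big1 // => l _; case E: (Uof F J l == u) => //=.
by move/eqP: E; rewrite /Uof Fminus_id // => Eu; case: eqP => // E; case: Hz; rewrite -Eu.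
Qed.

Lemma pcond_ge0 J z u : 0 <= pcond mu M F J z u.
Proof.
rewrite /pcond; have := PXU_ge0 J z u; have := PU_ge0 J u => H1 H2.
case: (Req_dec (PU mu M F J u) 0) => [->|H3].
  by rewrite /Rdiv Rinv_0 Rmult_0_r; lra.
by apply: Rmult_le_pos => //; apply/Rlt_le/Rinv_0_lt_compat; lra.
Qed.

Lemma pcond_sum J u : 0 < PU mu M F J u ->
  pcond mu M F J A u + pcond mu M F J B u = 1.
Proof. by move=> H; rewrite /pcond -PXU_sum; field; rewrite PXU_sum; lra. Qed.

Definition pi_fold J x (l : seq (src * src)) : option R :=
  foldr (fun u acc =>
           if Rlt_dec 0 (PU mu M F J u)
           then Some (match acc with
                      | None => pcond mu M F J x u
                      | Some m => Rmin (pcond mu M F J x u) m end)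
           else acc) None l.

Lemma pi_foldP J x l :
  match pi_fold J x l with
  | Some m => 0 <= m /\ forall u, u \in l -> 0 < PU mu M F J u -> m <= pcond mu M F J x u
  | None => forall u, u \in l -> ~ 0 < PU mu M F J u
  end.
Proof.
elim: l => [//|v l IH] /=; rewrite -/(pi_fold J x l).
case: Rlt_dec => Hv; case: (pi_fold J x l) IH => [m [Hm IH]|IH] /=.
- split; first by apply: Rmin_glb => //; exact: pcond_ge0.
  move=> u; rewrite in_cons => /orP [/eqP -> _|Hu HPu]; first exact: Rmin_l.
  exact: Rle_trans (Rmin_r _ _) (IH u Hu HPu).
- split; first exact: pcond_ge0.
  move=> u; rewrite in_cons => /orP [/eqP -> _|Hu HPu]; first lra.
  by case: (IH u Hu).
- split => // u; rewrite in_cons => /orP [/eqP -> //|Hu HPu]; exact: IH.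
- by move=> u; rewrite in_cons => /orP [/eqP -> //|Hu]; exact: IH.
Qed.

Lemma in_all_u (u : src * src) : u \in all_u.
Proof. by case: u => [[] []]. Qed.

(* pi_t(x) is a nonnegative lower bound of p(x|u) over every u of positive
   probability; this is all the proof uses about pi_t. *)
Lemma pi_ge0 J x : 0 <= pi_t mu M F J x.
Proof.
have := pi_foldP J x all_u; rewrite /pi_t -/(pi_fold J x all_u).
by case: (pi_fold J x all_u) => [m [] //|_]; lra.
Qed.

Lemma pi_le J x u : 0 < PU mu M F J u -> pi_t mu M F J x <= pcond mu M F J x u.
Proof.
move=> Hu; have := pi_foldP J x all_u; rewrite /pi_t -/(pi_fold J x all_u).
case: (pi_fold J x all_u) => [m [] _ H|H]; first exact: H (in_all_u u) Hu.
by case: (H u (in_all_u u)).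
Qed.

Definition query_law J (q : query) : R :=
  match q with
  | Some y => pi_t mu M F J y
  | None => 1 - pi_t mu M F J A - pi_t mu M F J B
  end.

Lemma query_law_sum J : \big[Rplus/0]_(q : query) query_law J q = 1.
Proof. by rewrite sum_query /=; ring. Qed.

(* One-step mixing: whenever P(U_J = u) > 0, averaging the kernel over X_J
   given U_J = u yields [query_law], whatever u is.  It only needs
   0 <= pi_t(x) <= p(x|u), i.e. that the kernel is a probability. *)
Lemma kern_mix J u q : 0 < PU mu M F J u ->
  pcond mu M F J A u * kern mu M F J u A q + pcond mu M F J B u * kern mu M F J u B q
  = query_law J q.
Proof.
move=> Hu.
have cancel x : pcond mu M F J x u * Rdiv (pi_t mu M F J x) (pcond mu M F J x u)
                = pi_t mu M F J x.
  have := pi_ge0 J x; have := pi_le x Hu.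
  case: (Req_dec (pcond mu M F J x u) 0) => [->|?] *; [lra | field; lra].
have := cancel A; have := cancel B; have := pcond_sum Hu.
case: q => [[]|] /=; rewrite /A /B /= => Hs HB HA.
- by rewrite HA; lra.
- by rewrite HB; lra.
- by rewrite !Rmult_minus_distr_l HA HB; lra.
Qed.

(* Time i is hidden at stage J if it is an OFF time before J; the
   coordinates visible at stage J = t+1 are exactly those indexed by B_t. *)
Definition hidden (J i : nat) : bool := (i < J)%nat && ~~ F i.

Definition agree (n J : nat) (x y : seq src) : bool :=
  all (fun i => hidden J i || (nth A x i == nth A y i)) (iota 0 n.+1).

Lemma agreeP n J x y :
  reflect (forall i, (i <= n)%nat -> hidden J i || (nth A x i == nth A y i))
          (agree n J x y).
Proof.
apply: (iffP allP) => H i Hi.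
  by apply: H; rewrite mem_iota /= add0n ltnS.
by apply: H; move: Hi; rewrite mem_iota /= add0n ltnS.
Qed.

Lemma agree_Uof n J J' x y : (J.+1 <= n)%nat ->
  ~~ hidden J' (Fminus F J) -> ~~ hidden J' J.+1 ->
  agree n J' x y -> Uof F J x = Uof F J y.
Proof.
move=> HJ H1 H2 /agreeP Hag; rewrite /Uof.
have E1 := Hag (Fminus F J); have E2 := Hag J.+1.
rewrite (negPf H1) /= in E1; rewrite (negPf H2) /= in E2.
rewrite (eqP (E1 _)); last by have := Fminus_le F J; lia.
by rewrite (eqP (E2 _)).
Qed.

Definition Pvis n J (y : seq src) : R :=
  tsum n.+1 (fun x => if agree n J x y then pp mu M x else 0).

Lemma Pvis_ge0 n J y : 0 <= Pvis n J y.
Proof. by apply: tsum_ge0 => x; case: ifP => _; [exact: pp_ge0 | lra]. Qed.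

Lemma PU_horizon n J u : (J.+1 <= n)%nat ->
  tsum n.+1 (fun l => if Uof F J l == u then pp mu M l else 0) = PU mu M F J u.
Proof.
move=> HJ; rewrite PU_tsum.
rewrite /tsum (eq_bigr (fun x : n.+1.-tuple src =>
                 pp mu M x * (if Uof F J x == u then 1 else 0))); last by move=> *; rewrite -ifmul.
rewrite [RHS](eq_bigr (fun x : J.+2.-tuple src =>
                 pp mu M x * (if Uof F J x == u then 1 else 0))); last by move=> *; rewrite -ifmul.
apply: (@pp_marg mu M HM1 n J.+1 (fun l => if Uof F J l == u then 1 else 0)) => // s Hs.
by rewrite /Uof !nth_take //; have := Fminus_le F J; lia.
Qed.

Lemma Pvis_le_PU n J J' y : (J.+1 <= n)%nat ->
  ~~ hidden J' (Fminus F J) -> ~~ hidden J' J.+1 ->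
  Pvis n J' y <= PU mu M F J (Uof F J y).
Proof.
move=> HJ H1 H2; rewrite -(@PU_horizon n) //; apply: tsum_le => x.
case: ifP => Hag; last by case: ifP => _; [exact: pp_ge0 | lra].
by rewrite (agree_Uof HJ H1 H2 Hag) eqxx; lra.
Qed.

Lemma agree_on n J x y : F J = true -> agree n J.+1 x y = agree n J x y.
Proof.
move=> HJ; apply: eq_all => i; rewrite /hidden ltnS leq_eqVlt.
by case: eqP => [->|] //=; rewrite HJ /= ltnn.
Qed.

Lemma agree_set n J x y z : F J = false -> (J <= n)%nat ->
  agree n J x (set_nth A y J z) = agree n J.+1 x y && (nth A x J == z).
Proof.
move=> HJ Hn; apply/agreeP/andP.
  move=> H; split; last first.
    by have := H J Hn; rewrite /hidden ltnn /= nth_set_nth /= eqxx.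
  apply/agreeP => i Hi; have := H i Hi; rewrite nth_set_nth /=.
  case: (eqVneq i J) => [-> _|Hne]; first by rewrite /hidden ltnSn HJ.
  rewrite /hidden; case/orP => [/andP [H1 H2]|->]; last by rewrite orbT.
  by rewrite (ltn_trans H1 (ltnSn J)) H2.
move=> [/agreeP H /eqP Hz] i Hi; rewrite nth_set_nth /=.
case: (eqVneq i J) => [->|Hne]; first by rewrite Hz eqxx orbT.
have := H i Hi; rewrite /hidden; case/orP => [/andP [H1 H2]|->]; last by rewrite orbT.
by rewrite H2 andbT; apply/orP; left; lia.
Qed.

Lemma agree_splice n J x w y : F J = false -> size x = n.+1 ->
  agree n J.+1 (splice (Fminus F J) J.+1 x w) y = agree n J.+1 x y.
Proof.
move=> HJ Hx; apply: eq_in_all => i; rewrite mem_iota add0n => /andP [_ Hi].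
rewrite nth_splice Hx Hi.
case: (boolP (Fminus F J < i < J.+1)%nat) => //= /andP [H1 H2].
by rewrite /hidden H2 (Fminus_off H1).
Qed.

Definition tsplice (m e N : nat) (x : N.-tuple src) (w : seq src) : N.-tuple src :=
  @Tuple N src (splice m e x w) (introT eqP (etrans (size_splice m e x w) (size_tuple x))).

(* Conditional independence at an OFF time J: given U_J, the hidden value
   X_J is independent of the visible coordinates.  In product form,
   P(vis_J = y[J:=z]) P(U_J = u) = P(vis_{J+1} = y) P(X_J = z, U_J = u),
   proved by the bijection (x, w) |-> (splice x w, splice w x). *)
Lemma off_cond_indep n J y z : F J = false -> (J.+1 <= n)%nat ->
  Pvis n J (set_nth A y J z) * PU mu M F J (Uof F J y) =
  Pvis n J.+1 y * PXU mu M F J z (Uof F J y).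
Proof.
move=> HJ Hn; set m := Fminus F J.
have Hm : (m < J)%nat.
  rewrite ltn_neqAle Fminus_le andbT; apply/eqP => E.
  by have := Fminus_on HF0 J; rewrite -/m E HJ.
rewrite PU_tsum PXU_tsum /Pvis !tsumM.
pose phi := fun p : n.+1.-tuple src * J.+2.-tuple src =>
  (tsplice m J.+1 p.1 p.2, tsplice m J.+1 p.2 p.1).
have phiK : cancel phi phi.
  move=> [x w]; rewrite /phi /=; congr pair; apply: val_inj => /=; apply: spliceK.
    by rewrite size_tuple.
  by rewrite size_tuple; lia.
rewrite [RHS](reindex_inj (can_inj phiK)); apply: eq_bigr => [[x w]] _ /=.
have Hx : size x = n.+1 by rewrite size_tuple.
have Hw : size w = J.+2 by rewrite size_tuple.
have -> : Uof F J (splice m J.+1 w x) = Uof F J w.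
  have Hm2 : (m < J.+2)%nat by lia.
  have Hmm : (m < m < J.+1)%nat = false by lia.
  have HJJ : (m < J.+1 < J.+1)%nat = false by lia.
  by rewrite /Uof -/m !nth_splice Hw ltnSn Hm2 Hmm HJJ.
have -> : nth A (splice m J.+1 w x) J = nth A x J.
  have HJ2 : (J < J.+2)%nat by lia.
  by rewrite nth_splice Hw HJ2 Hm ltnSn.
rewrite !ifprod agree_splice // agree_set //; last by lia.
case E1: (agree n J.+1 x y) => //=.
case E2: (nth A x J == z); rewrite /= ?andbF //.
case E3: (Uof F J w == Uof F J y) => //=.
move/agreeP: E1 => E1; move/eqP: E3; rewrite /Uof => -[E3m E3e].
have Hxm : nth A x m = nth A w m.
  rewrite E3m; apply/eqP; have := E1 m; rewrite /hidden Fminus_on //= andbF; apply.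
  exact: leq_trans (ltnW Hm) (ltnW Hn).
have HxJ : nth A x J.+1 = nth A w J.+1.
  by rewrite E3e; apply/eqP; have := E1 J.+1; rewrite /hidden ltnn /=; apply.
by symmetry; apply: pp_splice; rewrite ?Hx ?Hw // ltnW.
Qed.

Definition kstep s (x : seq src) (q : query) : R :=
  kern mu M F s (Uof F s x) (nth A x s) q.
Definition kprod J (x : seq src) (qs : seq query) : R :=
  \big[Rmult/1]_(s < J) kstep s x (nth None qs s).
Definition qprod J (qs : seq query) : R :=
  \big[Rmult/1]_(s < J) query_law s (nth None qs s).

Definition Pvisq n J (y : seq src) (qs : seq query) : R :=
  tsum n.+1 (fun x => if agree n J x y then pp mu M x * kprod J x qs else 0).

(* At an ON time J, X_J and U_J are visible, so the kernel of step J is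
   the constant kstep J y. *)
Lemma Pvisq_step_on n J y qs : F J = true -> (J.+1 <= n)%nat ->
  Pvisq n J.+1 y qs = Pvisq n J y qs * kstep J y (nth None qs J).
Proof.
move=> HJ HJn; rewrite /Pvisq -tsumZ; apply: tsum_ext => x _; rewrite agree_on //.
case Hag: (agree n J x y); last by ring.
have HU : Uof F J x = Uof F J y.
  apply: (agree_Uof HJn _ _ Hag); first by rewrite Fminus_id // /hidden ltnn.
  by rewrite /hidden ltnNge leqnSn.
have HX : nth A x J = nth A y J.
  by have /agreeP/(_ J (ltnW HJn)) := Hag; rewrite /hidden ltnn /= => /eqP.
by rewrite /kprod big_ord_recr /= /kstep HU HX; ring.
Qed.

(* At an ON time, the kernel of step J averaged against the visible law is
   the query law: p(.|U_J) is a point mass at X_J = U_J.1. *)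
Lemma on_mix n J y q : F J = true -> (J.+1 <= n)%nat ->
  Pvis n J y * kstep J y q = Pvis n J.+1 y * query_law J q.
Proof.
move=> HJ HJn.
have -> : Pvis n J.+1 y = Pvis n J y.
  by apply: tsum_ext => x _; rewrite agree_on.
have [->|HP0] := Req_dec (Pvis n J y) 0; first by ring.
have HPU : 0 < PU mu M F J (Uof F J y).
  have := Pvis_ge0 n J y.
  have := @Pvis_le_PU n J J y HJn; rewrite Fminus_id // /hidden ltnn ltnNge leqnSn.
  by move=> /(_ isT isT); lra.
have pc z : pcond mu M F J z (Uof F J y) = if z == nth A y J then 1 else 0.
  have U1 : (Uof F J y).1 = nth A y J by rewrite /Uof Fminus_id.
  rewrite /pcond PXU_on // U1; case: eqP => _; last by rewrite /Rdiv Rmult_0_l.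
  by rewrite /Rdiv Rinv_r //; lra.
have := kern_mix q HPU; rewrite !pc /kstep.
by case: (nth A y J); rewrite /A /B /= => <-; ring.
Qed.

Lemma Pvisq_step_off n J y qs : F J = false -> (J.+1 <= n)%nat ->
  Pvisq n J.+1 y qs =
  Pvisq n J (set_nth A y J A) qs * kern mu M F J (Uof F J y) A (nth None qs J) +
  Pvisq n J (set_nth A y J B) qs * kern mu M F J (Uof F J y) B (nth None qs J).
Proof.
move=> HJ HJn; rewrite /Pvisq -!tsumZ -tsumD; apply: tsum_ext => x _.
rewrite !agree_set ?(ltnW HJn) //.
case Hag: (agree n J.+1 x y) => /=; last by ring.
have HU : Uof F J x = Uof F J y.
  apply: (agree_Uof HJn _ _ Hag); first by rewrite /hidden Fminus_on // andbF.
  by rewrite /hidden ltnn.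
rewrite /kprod big_ord_recr /= /kstep HU.
by case: (nth A x J); rewrite /A /B /=; ring.
Qed.

(* At an OFF time, averaging the kernel of step J against the visible law
   gives the query law, by the conditional independence of X_J. *)
Lemma off_mix n J y q : F J = false -> (J.+1 <= n)%nat ->
  Pvis n J (set_nth A y J A) * kern mu M F J (Uof F J y) A q +
  Pvis n J (set_nth A y J B) * kern mu M F J (Uof F J y) B q =
  Pvis n J.+1 y * query_law J q.
Proof.
move=> HJ HJn; set u := Uof F J y.
have vis_m J' : ~~ hidden J' (Fminus F J) by rewrite /hidden Fminus_on // andbF.
have [HPU|HPU] := Rle_lt_or_eq_dec _ _ (PU_ge0 J u); last first.
  have Uz z : Uof F J (set_nth A y J z) = u.
    have Hm : Fminus F J != J.
      by apply/eqP => E; have := Fminus_on HF0 J; rewrite E HJ.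
    by rewrite /u /Uof !nth_set_nth /= (negPf Hm) gtn_eqF.
  have Pz z : Pvis n J (set_nth A y J z) = 0.
    have := Pvis_ge0 n J (set_nth A y J z).
    have := @Pvis_le_PU n J J (set_nth A y J z) HJn (vis_m J).
    by rewrite Uz -HPU /hidden ltnNge leqnSn => /(_ isT); lra.
  have P1 : Pvis n J.+1 y = 0.
    have := Pvis_ge0 n J.+1 y; have := @Pvis_le_PU n J J.+1 y HJn (vis_m _).
    by rewrite -/u -HPU /hidden ltnn => /(_ isT); lra.
  by rewrite !Pz P1; ring.
have Pz z : Pvis n J (set_nth A y J z) = Pvis n J.+1 y * pcond mu M F J z u.
  have := @off_cond_indep n J y z HJ HJn; rewrite -/u => E.
  by rewrite /pcond /Rdiv -Rmult_assoc -E; field; lra.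
by rewrite !Pz -(kern_mix q HPU); ring.
Qed.

Lemma Pvisq_factor n J y qs : (J <= n)%nat ->
  Pvisq n J y qs = Pvis n J y * qprod J qs.
Proof.
elim: J y => [|J IH] y HJn.
  rewrite /Pvisq /Pvis /qprod -tsumZ big_ord0; apply: tsum_ext => x _.
  by rewrite /kprod big_ord0; case: ifP => _; ring.
have IH' z := IH z (ltnW HJn).
rewrite /qprod big_ord_recr /= -/(qprod J qs) (Rmult_comm (qprod J qs)) -Rmult_assoc.
case HJ: (F J).
- by rewrite Pvisq_step_on // IH' -on_mix //; ring.
- by rewrite Pvisq_step_off // !IH' -off_mix //; ring.
Qed.

Lemma PjointE n t (w : Omega n t) :
  Pjoint mu M F w = pp mu M w.1 * kprod t.+1 w.1 w.2.
Proof. by rewrite /Pjoint pathprobE. Qed.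

Lemma inB_hidden t i : inB F t i = ~~ hidden t.+1 i.
Proof. by rewrite /inB /hidden negb_and negbK ltnS; case: ltnP; rewrite ?orbT ?orbF. Qed.

Lemma XB_agree n t (x y : n.+1.-tuple src) :
  (XB F t x == XB F t y) = agree n t.+1 x y.
Proof.
apply/eqP/agreeP.
  move=> H i Hi.
  have := congr1 (fun f : {ffun 'I_n.+1 -> option src} => f (Ordinal (Hi : (i < n.+1)%nat))) H.
  by rewrite !ffunE /= inB_hidden; case: (hidden t.+1 i) => //= -[->]; exact: eqxx.
move=> H; apply/ffunP => i; rewrite !ffunE inB_hidden.
case E: (hidden t.+1 i) => //=.
by have := H i; rewrite E /= -ltnS => /(_ (ltn_ord i)) /eqP ->.
Qed.

Definition PXB n t (Phi : pred {ffun 'I_n.+1 -> option src}) : R :=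
  \big[Rplus/0]_(x : n.+1.-tuple src) (if Phi (XB F t x) then pp mu M x else 0).

Lemma XB_query_factor n t Phi (qs : seq query) : (t.+1 <= n)%nat ->
  \big[Rplus/0]_(x : n.+1.-tuple src)
     (if Phi (XB F t x) then pp mu M x * kprod t.+1 x qs else 0) =
  PXB t Phi * qprod t.+1 qs.
Proof.
move=> Htn; rewrite /PXB !(sum_partition (fun x : n.+1.-tuple src => XB F t x)) /=.
rewrite big_distrl /=; apply: eq_bigr => a _; case: (Phi a); last by rewrite Rmult_0_l.
case: (pickP (fun y : n.+1.-tuple src => XB F t y == a)) => [y /eqP <-|none].
  have := @Pvisq_factor n t.+1 y qs Htn; rewrite /Pvisq /Pvis /tsum.
  by under eq_bigr do rewrite XB_agree; move=> ->; under eq_bigr do rewrite XB_agree.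
by rewrite !big1 ?Rmult_0_l // => x _; rewrite none.
Qed.

Lemma PXB_predT n t : PXB t (predT : pred {ffun 'I_n.+1 -> option src}) = 1.
Proof. exact: pp_total. Qed.

Lemma pr_XB_query n t Phi (b : t.+1.-tuple query) : (t.+1 <= n)%nat ->
  pr (Pjoint mu M F (n := n) (t := t)) (fun w => Phi (XB F t w.1) && (w.2 == b)) =
  PXB t Phi * qprod t.+1 b.
Proof.
move=> Htn; rewrite /pr rsum_pair /rsum -(XB_query_factor Phi b Htn).
apply: eq_bigr => x _ /=.
by rewrite (sum_if_eq b (Phi (XB F t x)) (fun i => Pjoint mu M F (x, i))) PjointE.
Qed.

Lemma qprod_total k : \big[Rplus/0]_(qs : k.-tuple query) qprod k qs = 1.
Proof.
by rewrite /qprod (tsum_prod None k query_law) big1 // => s _; rewrite query_law_sum.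
Qed.

Lemma pr_XB n t Phi : (t.+1 <= n)%nat ->
  pr (Pjoint mu M F (n := n) (t := t)) (fun w => Phi (XB F t w.1)) = PXB t Phi.
Proof.
move=> Htn; rewrite /pr rsum_pair /rsum exchange_big /=.
rewrite (eq_bigr (fun qs : t.+1.-tuple query => PXB t Phi * qprod t.+1 qs)).
  by rewrite -big_distrr /= qprod_total Rmult_1_r.
move=> qs _; rewrite -(XB_query_factor Phi qs Htn).
by apply: eq_bigr => x _; rewrite PjointE.
Qed.

Lemma XB_query_indep n t Phi (b : t.+1.-tuple query) : (t.+1 <= n)%nat ->
  let P := Pjoint mu M F (n := n) (t := t) in
  pr P (fun w => Phi (XB F t w.1) && (w.2 == b)) =
  pr P (fun w => Phi (XB F t w.1)) * pr P (fun w => w.2 == b).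
Proof.
move=> Htn P; rewrite !pr_XB_query // pr_XB //.
rewrite (@pr_ext _ _ _ (fun w => predT (XB F t w.1) && (w.2 == b))) //.
by rewrite pr_XB_query // PXB_predT Rmult_1_l.
Qed.

Lemma expect_query n t (g : query -> R) : (t.+1 <= n)%nat ->
  rsum (fun w : Omega n t => Pjoint mu M F w * g (nth None w.2 t)) =
  \big[Rplus/0]_(q : query) (query_law t q * g q).
Proof.
move=> Htn; pose f s q := if s == t :> nat then query_law s q * g q else query_law s q.
have law (b : t.+1.-tuple query) : \big[Rplus/0]_(x : n.+1.-tuple src) Pjoint mu M F (x, b) = qprod t.+1 b.
  have := pr_XB_query predT b Htn; rewrite PXB_predT Rmult_1_l => <-.
  by rewrite /pr rsum_pair /rsum; apply: eq_bigr => x _; rewrite sum_if_eq.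
rewrite rsum_pair /rsum exchange_big /=.
rewrite (eq_bigr (fun b : t.+1.-tuple query => \big[Rmult/1]_(s < t.+1) f s (nth None b s))).
  rewrite (tsum_prod None t.+1 f) big_ord_recr /= /f eqxx big1 ?Rmult_1_l // => s _.
  by rewrite /= (ltn_eqF (ltn_ord s)) query_law_sum.
move=> b _; rewrite -big_distrl /= law /qprod !big_ord_recr /= /f eqxx Rmult_assoc.
by congr (_ * _); apply: eq_bigr => s _; rewrite /= (ltn_eqF (ltn_ord s)).
Qed.

Lemma pr_singleton n t : (t.+1 <= n)%nat ->
  pr (Pjoint mu M F (n := n) (t := t)) (fun w => qsize (nth None w.2 t) == 1%nat) =
  pi_t mu M F t A + pi_t mu M F t B.
Proof.
move=> Htn; transitivity (rsum (fun w : Omega n t => Pjoint mu M F w *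
    (fun q : query => if qsize q == 1%nat then 1 else 0) (nth None w.2 t))).
  by apply: eq_bigr => w _; rewrite ifmul.
by rewrite (expect_query (fun q : query => if qsize q == 1%nat then 1 else 0) Htn) sum_query /=; ring.
Qed.

Lemma expect_size n t : (t.+1 <= n)%nat ->
  expect (Pjoint mu M F (n := n) (t := t)) (fun w => INR (qsize (nth None w.2 t))) =
  2 - pi_t mu M F t A - pi_t mu M F t B.
Proof.
by move=> Htn; rewrite /expect (expect_query (fun q => INR (qsize q)) Htn) sum_query /=; ring.
Qed.

(* Decodability: the kernel never proposes the wrong singleton. *)
Lemma decodable n t :
  pr (Pjoint mu M F (n := n) (t := t))
     (fun w => ~~ in_query (nth A w.1 t) (nth None w.2 t)) = 0.
Proof.
apply: big1 => w _; case: ifP => // Hc.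
rewrite PjointE /kprod big_ord_recr /= /kstep /kern.
by move: Hc; case: (nth None w.2 t) => [y|] //= /negbTE ->; ring.
Qed.

(* U_t is a function of X_{B_t}: both F^-(t) and t+1 belong to B_t. *)
Definition U_of_XB n t (v : {ffun 'I_n.+1 -> option src}) : src * src :=
  (odflt A (v (inord (Fminus F t))), odflt A (v (inord t.+1))).

Lemma Uof_XB n t (x : n.+1.-tuple src) : (t.+1 <= n)%nat ->
  Uof F t x = U_of_XB t (XB F t x).
Proof.
move=> Htn; have Hle := Fminus_le F t.
rewrite /U_of_XB !ffunE !inordK ?ltnS //; last exact: leq_trans Hle (ltnW Htn).
by rewrite /inB Hle Fminus_on // ltnSn orbT.
Qed.

Lemma Uof_query_indep n t a (b : t.+1.-tuple query) : (t.+1 <= n)%nat ->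
  let P := Pjoint mu M F (n := n) (t := t) in
  pr P (fun w => (Uof F t w.1 == a) && (w.2 == b)) =
  pr P (fun w => Uof F t w.1 == a) * pr P (fun w => w.2 == b).
Proof.
move=> Htn P; pose Phi (v : {ffun 'I_n.+1 -> option src}) := U_of_XB t v == a.
have UX (w : Omega n t) : (Uof F t w.1 == a) = Phi (XB F t w.1).
  by rewrite /Phi -Uof_XB.
rewrite (@pr_ext _ P _ (fun w => Phi (XB F t w.1) && (w.2 == b))); last by move=> w; rewrite UX.
by rewrite (@pr_ext _ P _ _ UX); exact: XB_query_indep.
Qed.

End Scheme.

Local Close Scope R_scope.

Theorem mainTheorem2 (mu : src -> R) (M : src -> src -> R) (F : nat -> bool)
  (Hmu0 : forall x, (0 <= mu x)%R) (Hmu1 : (mu A + mu B = 1)%R)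
  (HM0 : forall x y, (0 <= M x y)%R) (HM1 : forall x, (M x A + M x B = 1)%R)
  (HF0 : F 0%N = true) :
  forall t n : nat, (t.+1 <= n)%N ->
  let P := Pjoint mu M F (n := n) (t := t) in
  [/\ (* decodability: X_t in Q_t almost surely *)
      pr P (fun w => ~~ in_query (nth A w.1 t) (nth None w.2 t)) = 0%R,
      (* P(|Q_t| = 1) = pi_t(A) + pi_t(B) *)
      pr P (fun w => qsize (nth None w.2 t) == 1%N)
        = (pi_t mu M F t A + pi_t mu M F t B)%R,
      (* E|Q_t| = 2 - pi_t(A) - pi_t(B) *)
      expect P (fun w => INR (qsize (nth None w.2 t)))
        = (2 - pi_t mu M F t A - pi_t mu M F t B)%R,
      (* I(U_t; Q_0..Q_t) = 0 *)
      MI P (fun w => Uof F t w.1) (fun w => w.2) = 0%R &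
      (* privacy: I(X_{B_t}; Q_0..Q_t) = 0 (all coordinates up to horizon n) *)
      MI P (fun w => XB F t w.1) (fun w => w.2) = 0%R].
Proof.
move=> t n Htn P; split.
- exact: decodable.
- exact: pr_singleton Hmu0 Hmu1 HM0 HM1 HF0 _ _ Htn.
- exact: expect_size Hmu0 Hmu1 HM0 HM1 HF0 _ _ Htn.
- apply: MI_indep => a b.
  exact: Uof_query_indep Hmu0 Hmu1 HM0 HM1 HF0 _ _ a b Htn.
- apply: MI_indep => a b.
  exact: XB_query_indep Hmu0 Hmu1 HM0 HM1 HF0 _ _ (pred1 a) b Htn.
Qed.
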